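(* Let $\mathcal N=(Q,\Sigma,\delta,I,F)$ be an NFA with $L=\mathcal L(\mathcal N)$. Then $\mathsf G^r(\mathcal N)$ (equivalently, the determinization $\mathcal N^D$) is the minimal DFA for $L$ (up to isomorphism) if and only if for every $q\in Q$, $P_{\sim^r_L}(W^{\mathcal N}_{I,q})=W^{\mathcal N}_{I,q}$.
   Context: NFA $\mathcal N=(Q,\Sigma,\delta,I,F)$ with $\delta:Q\times\Sigma\to\wp(Q)$ extended to words as $\hat\delta$; $W^{\mathcal N}_{S,T}=\{w\in\Sigma^*\mid\exists q\in S,q'\in T: q'\in\hat\delta(q,w)\}$ (singletons without braces); $\mathrm{post}^{\mathcal N}_w(S)=\{q\mid w\in W^{\mathcal N}_{S,q}\}$; $\mathcal L(\mathcal N)=W^{\mathcal N}_{I,F}$. $u\sim^r_L v\iff u^{-1}L=v^{-1}L$ where $u^{-1}L=\{x\mid ux\in L\}$; $u\sim^r_{\mathcal N}v\iff \mathrm{post}^{\mathcal N}_u(I)=\mathrm{post}^{\mathcal N}_v(I)$. For an equivalence $\sim$, $P_\sim(u)$ is the class of $u$ and $P_\sim(S)=\bigcup_{u\in S}P_\sim(u)$. $\mathsf G^r(\mathcal N)$ is the DFA with states $\{P_{\sim^r_{\mathcal N}}(u)\mid u\in\Sigma^*\}$, initial state $P_{\sim^r_{\mathcal N}}(\varepsilon)$, final states $\{P_{\sim^r_{\mathcal N}}(u)\mid u\in L\}$, and transition from $P_{\sim^r_{\mathcal N}}(u)$ on $a$ to $P_{\sim^r_{\mathcal N}}(ua)$;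 it is isomorphic to the reachable subset-construction DFA $\mathcal N^D$. The minimal DFA for $L$ is the unique (up to isomorphism) complete DFA for $L$ with fewest states. *)

From Stdlib Require Import ClassicalEpsilon.
From HB Require Import structures.
From mathcomp Require Import all_boot.
Set Implicit Arguments. Unset Strict Implicit. Unset Printing Implicit Defensive.

Section Automata.
Variable Sigma : finType.

Definition lang := seq Sigma -> Prop.

Record nfa := NFA {
  nstate : finType;
  ndelta : nstate -> Sigma -> {set nstate};
  ninit  : {set nstate};
  nfinal : {set nstate} }.

Definition post (N : nfa) (w : seq Sigma) (S : {set nstate N}) : {set nstate N} :=
  foldl (fun (X : {set nstate N}) a => \bigcup_(q in X) ndelta q a) S w.

Definition hdelta (N : nfa) (q : nstate N) (w : seq Sigma) := @post N w [set q].

Definition Wl (N : nfa) (S T : {set nstate N}) : lang :=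
  fun w => exists q q', [/\ q \in S, q' \in T & q' \in hdelta q w].

Definition nlang (N : nfa) : lang := Wl (ninit N) (nfinal N).

Definition rquot (L : lang) (u : seq Sigma) : lang := fun x => L (u ++ x).
Definition rnerode (L : lang) (u v : seq Sigma) : Prop :=
  forall x, rquot L u x <-> rquot L v x.

Definition closure_of (R : seq Sigma -> seq Sigma -> Prop) (S : lang) : lang :=
  fun w => exists2 u, S u & R u w.

Record dfa := DFA {
  dstate : finType;
  dinit  : dstate;
  ddelta : dstate -> Sigma -> dstate;
  dfinal : pred dstate }.

Definition dlang (A : dfa) : lang := fun w => @dfinal A (foldl (@ddelta A) (@dinit A) w).

Definition accepts (A : dfa) (L : lang) := forall w, dlang A w <-> L w.

(* A is a minimal DFA for L: it recognises L and has fewest states among all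
   complete DFAs recognising L (the minimal DFA is unique up to isomorphism). *)
Definition is_minimal_dfa (A : dfa) (L : lang) :=
  accepts A L /\ forall B : dfa, accepts B L -> #|dstate A| <= #|dstate B|.

(* Determinization N^D restricted to reachable subsets, isomorphic to G^r(N):
   states are the sets post_u(I) for u in Sigma^* *)
Definition reachable (N : nfa) (S : {set nstate N}) : Prop :=
  exists u, @post N u (ninit N) = S.

Definition reachb (N : nfa) (S : {set nstate N}) : bool :=
  if excluded_middle_informative (reachable S) then true else false.

Lemma reachbP (N : nfa) (S : {set nstate N}) : reflect (reachable S) (reachb S).
Proof.
rewrite /reachb; case: excluded_middle_informative => H; [left|right]; exact H.
Qed.

Definition rstate (N : nfa) := {S : {set nstate N} | reachb S}.

Lemma reach_init (N : nfa) : reachb (ninit N).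
Proof. by apply/reachbP; exists [::]. Qed.

Lemma reach_step (N : nfa) (S : rstate N) (a : Sigma) :
  reachb (@post N [:: a] (val S)).
Proof.
case: S => S /= /reachbP [u Hu]; apply/reachbP; exists (rcons u a).
by rewrite /post -cats1 foldl_cat -/(@post N u _) Hu.
Qed.

Definition determinize (N : nfa) : dfa :=
  @DFA (rstate N) (exist _ (ninit N) (reach_init N))
       (fun S a => exist _ (@post N [:: a] (val S)) (reach_step S a))
       (fun S => val S :&: nfinal N != set0).

End Automata.

From Stdlib Require Import ClassicalEpsilon.
From mathcomp Require Import all_boot.

Set Implicit Arguments.
Unset Strict Implicit.
Unset Printing Implicit Defensive.

(* The proof reduces the theorem to a characterisation of minimal DFAs.

   1. Minimality of DFAs.  For a DFA A recognising L, call two states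
      equivalent when they accept the same residual language.  Merging each
      class to a representative yields a DFA (the quotient of A) that still
      recognises L and is strictly smaller as soon as two distinct states are
      equivalent.  Hence in a minimal DFA, Nerode-equivalent words lead to the
      same state.  Conversely, if every state of A is reachable and
      Nerode-equivalent words always lead to the same state, then any DFA B
      recognising L receives an injection from the states of A, so A is
      minimal.
   2. The determinisation N^D reaches the state post_u(I) on the word u and
      every one of its states is reachable, so by 1 it is minimal iff the
      right Nerode equivalence of L refines u ~ v <-> post_u(I) = post_v(I).
   3. This refinement is equivalent to the closure condition of the theorem,
      because q \in post_u(I) exactly when u \in W_{I,q}. *)

Section DfaQuotient.
Variables (Sigma : finType) (A : dfa Sigma).
Notation state := (dstate A).

Definition run (s : state) (w : seq Sigma) : state := foldl (@ddelta _ A) s w.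

Definition state_equiv (s t : state) : Prop :=
  forall x, dfinal (run s x) = dfinal (run t x).

(* Its classical boolean reflection, needed to pick class representatives. *)
Definition state_equivb (s t : state) : bool :=
  if excluded_middle_informative (state_equiv s t) then true else false.

Lemma state_equivP s t : reflect (state_equiv s t) (state_equivb s t).
Proof.
by rewrite /state_equivb; case: excluded_middle_informative => H; [left|right].
Qed.

Lemma state_equiv_step s t a :
  state_equiv s t -> state_equiv (ddelta s a) (ddelta t a).
Proof. by move=> Hst x; apply: (Hst (a :: x)). Qed.

Definition canon (s : state) : state := odflt s [pick t | state_equivb t s].

Lemma canonE s : state_equiv (canon s) s.
Proof. by rewrite /canon; case: pickP => [t /state_equivP|]. Qed.

Lemma canon_eq s t : state_equiv s t -> canon s = canon t.
Proof.
move=> Hst; rewrite /canon.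
have -> : [pick u | state_equivb u s] = [pick u | state_equivb u t].
  apply: eq_pick => u; apply/state_equivP/state_equivP => Hu x.
    by rewrite Hu Hst.
  by rewrite Hu -Hst.
case: pickP => [//|Hnone].
by have /state_equivP := Hnone t; case=> x.
Qed.

Lemma canon_idem s : canon (canon s) = canon s.
Proof. exact: canon_eq (canonE s). Qed.

Definition qstate := {s : state | canon s == s}.

Definition qrepr (s : state) : qstate := exist _ (canon s) (introT eqP (canon_idem s)).

Definition quotient_dfa : dfa Sigma :=
  @DFA Sigma qstate (qrepr (dinit A)) (fun c a => qrepr (ddelta (val c) a))
       (fun c => dfinal (val c)).

Lemma quotient_run_equiv (c : qstate) (s : state) w :
  state_equiv (val c) s ->
  state_equiv (val (foldl (@ddelta _ quotient_dfa) c w)) (run s w).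
Proof.
elim: w c s => [|a w IH] c s //= Hcs; apply: IH => x /=.
by rewrite (canonE _ x); apply: state_equiv_step.
Qed.

Lemma quotient_dlang w : dlang quotient_dfa w <-> dlang A w.
Proof.
rewrite /dlang; have := @quotient_run_equiv (qrepr (dinit A)) (dinit A) w (canonE _) [::].
by move=> /= ->.
Qed.

Lemma quotient_card_lt s t :
  s != t -> state_equiv s t -> #|dstate quotient_dfa| < #|state|.
Proof.
move=> Hne Hst; rewrite /= card_sig.
have [u Hu] : exists u, canon u != u.
  case: (eqVneq (canon s) s) => [Es|]; last by exists s.
  exists t; apply: contra Hne => /eqP Et.
  by rewrite -Es -Et (canon_eq Hst).
rewrite -(cardC [pred x | canon x == x]) -[X in X < _]addn0 ltn_add2l.
by apply/card_gt0P; exists u; rewrite !inE.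
Qed.

End DfaQuotient.

Section MinimalDfa.
Variables (Sigma : finType) (L : lang Sigma) (A : dfa Sigma).
Hypothesis A_accepts : accepts A L.

Lemma run_residual u x : dfinal (run (run (dinit A) u) x) <-> rquot L u x.
Proof. by rewrite /run -foldl_cat; apply: A_accepts. Qed.

Lemma minimal_merges_nerode :
  is_minimal_dfa A L ->
  forall u v, rnerode L u v -> run (dinit A) u = run (dinit A) v.
Proof.
case=> _ Hmin u v Huv; apply/eqP/negPn/negP => Hne.
have Hequiv : state_equiv (run (dinit A) u) (run (dinit A) v).
  move=> x; apply/idP/idP => /run_residual Hx; apply/run_residual; exact/Huv.
have Hq : accepts (quotient_dfa A) L.
  by move=> w; rewrite quotient_dlang; apply: A_accepts.
by have := Hmin _ Hq; rewrite leqNgt (quotient_card_lt Hne Hequiv).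
Qed.

(* If all states are reachable and Nerode-equivalent words lead to the same
   state, then the states of A inject into those of any DFA for L. *)
Lemma nerode_merged_minimal :
  (forall s : dstate A, exists u, run (dinit A) u = s) ->
  (forall u v, rnerode L u v -> run (dinit A) u = run (dinit A) v) ->
  is_minimal_dfa A L.
Proof.
move=> Hreach Hmerge; split => // B HB.
have word (s : dstate A) : {u | run (dinit A) u = s}.
  exact: constructive_indefinite_description (Hreach s).
pose h (s : dstate A) := run (dinit B) (sval (word s)).
suff h_inj : injective h by exact: leq_card h_inj.
move=> s t; rewrite /h; case: (word s) => u Hu; case: (word t) => v Hv /= Huv.
rewrite -Hu -Hv; apply: Hmerge => x; rewrite /rquot -!HB /dlang !foldl_cat.
by rewrite -/(run _ u) -/(run _ v) Huv.
Qed.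

End MinimalDfa.

Section Nfa.
Variables (Sigma : finType) (N : nfa Sigma).
Notation I := (ninit N).

Lemma post_mem w (S : {set nstate N}) q' :
  q' \in post w S <-> exists2 q, q \in S & q' \in post w [set q].
Proof.
elim: w S => [|a w IH] S /=.
  split; first by exists q'; rewrite ?set11.
  by case=> q Hq; rewrite /post /= in_set1 => /eqP ->.
change (q' \in post w (\bigcup_(q in S) ndelta q a) <->
  exists2 q, q \in S & q' \in post w (\bigcup_(p in [set q]) ndelta p a)).
rewrite IH; split.
  case=> r /bigcupP [p Hp Hr] Hq; exists p => //.
  by rewrite big_set1; apply/IH; exists r.
case=> p Hp; rewrite big_set1 => /IH [r Hr Hq]; exists r => //.
by apply/bigcupP; exists p.
Qed.

Lemma Wl_post q u : Wl I [set q] u <-> q \in post u I.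
Proof.
rewrite post_mem; split; first by case=> p [q'] [Hp /set1P -> Hd]; exists p.
by case=> p Hp Hd; exists p, q; rewrite set11.
Qed.

Lemma nlang_post w : nlang N w <-> post w I :&: nfinal N != set0.
Proof.
split.
  case=> q [q'] [Hq Hq' Hd]; apply/set0Pn; exists q'.
  by rewrite inE Hq' andbT; apply/post_mem; exists q.
case/set0Pn => q'; rewrite inE => /andP [/post_mem [q Hq Hd] Hq'].
by exists q, q'.
Qed.

Lemma determinize_run u (S : dstate (determinize N)) :
  val (run S u) = post u (val S).
Proof. by elim: u S => [|a u IH] S //=; rewrite IH. Qed.

Lemma determinize_accepts : accepts (determinize N) (nlang N).
Proof.
by move=> w; rewrite nlang_post /dlang -/(run _ w) /= determinize_run.
Qed.

Lemma determinize_reachable (S : dstate (determinize N)) :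
  exists u, run (dinit (determinize N)) u = S.
Proof.
case: S => S HS; have /reachbP [u Hu] := HS.
by exists u; apply: val_inj; rewrite determinize_run.
Qed.

Lemma determinize_run_eq u v :
  run (dinit (determinize N)) u = run (dinit (determinize N)) v <->
  post u I = post v I.
Proof.
split => [|Huv]; first by move/(congr1 val); rewrite !determinize_run.
by apply: val_inj; rewrite !determinize_run.
Qed.

Lemma closure_condition_iff (L : lang Sigma) :
  (forall q w, closure_of (rnerode L) (Wl I [set q]) w <-> Wl I [set q] w) <->
  (forall u v, rnerode L u v -> post u I = post v I).
Proof.
split => [Hclosed u v Huv | Hrefine q w].
  apply/setP => q; apply/idP/idP => Hq; apply/Wl_post/Hclosed.
    by exists u => //; apply/Wl_post.
  by exists v; [apply/Wl_post | move=> x; split => /Huv].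
split; last by exists w => // x.
by case=> u /Wl_post Hu /Hrefine Huw; apply/Wl_post; rewrite -Huw.
Qed.

End Nfa.

Theorem theorem2 (Sigma : finType) (N : nfa Sigma) :
  is_minimal_dfa (determinize N) (nlang N) <->
  (forall q : nstate N,
     forall w, closure_of (rnerode (nlang N)) (Wl (ninit N) [set q]) w
               <-> Wl (ninit N) [set q] w).
Proof.
have HD := determinize_accepts N.
rewrite closure_condition_iff; split.
  by move=> Hmin u v /(minimal_merges_nerode HD Hmin) /determinize_run_eq.
move=> Hrefine; apply: nerode_merged_minimal HD (@determinize_reachable _ N) _.
by move=> u v /Hrefine /determinize_run_eq.
Qed.
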